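(* Let $F$ be a real multilinear polynomial on $[-1,1]^n$, let $\eta>0$, and let $x\in[-1,1]^n$. Put $I=\{i: x_i\in\{-1,1\}\}$. Suppose that: - $x$ is feasible; - $G(x)=0$; - $\frac{\partial F}{\partial x_i}(x)\ne0$ for every $i\in I$. Then $x$ is a local minimum of $F$ in $[-1,1]^n$.
   Context: $\Pi_{[-1,1]^n}$ denotes the Euclidean projection onto $[-1,1]^n$, and $G(x)=\frac1\eta\big(x-\Pi_{[-1,1]^n}(x-\eta\nabla F(x))\big)$ is the gradient mapping. Feasibility: $x$ is feasible if the polynomial obtained from $F$ by fixing $x_i$ to its value for every $i\in I$ is constant. Local minimum in a set $\Delta$: $x$ is a local minimum of $F$ in $\Delta$ if there is $\delta>0$ such that $F(x)\le F(x')$ for all $x'\in\Delta$ with $\|x-x'\|_2^2\le\delta$. *)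

From HB Require Import structures.
From mathcomp Require Import all_boot all_order all_algebra.
From mathcomp Require Import mpoly.
Set Implicit Arguments. Unset Strict Implicit. Unset Printing Implicit Defensive.
Import Order.TTheory GRing.Theory Num.Theory.
Local Open Scope ring_scope.

Section Defs.
Variables (R : realFieldType) (n : nat).

Definition multilinear (F : {mpoly R[n]}) : Prop :=
  forall m, m \in msupp F -> forall i : 'I_n, (m i <= 1)%N.

Definition in_cube (x : 'I_n -> R) : Prop := forall i, -1 <= x i <= 1.

(* Euclidean projection onto [-1,1]^n (coordinatewise clamp) *)
Definition proj_cube (x : 'I_n -> R) : 'I_n -> R :=
  fun i => Num.min 1 (Num.max (-1) (x i)).

Definition partial (F : {mpoly R[n]}) (i : 'I_n) (x : 'I_n -> R) : R :=
  (F^`M(i)).@[x].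

Definition grad (F : {mpoly R[n]}) (x : 'I_n -> R) : 'I_n -> R :=
  fun i => partial F i x.

Definition grad_map (F : {mpoly R[n]}) (eta : R) (x : 'I_n -> R) : 'I_n -> R :=
  fun i => (x i - proj_cube (fun j => x j - eta * grad F x j) i) / eta.

Definition on_bd (x : 'I_n -> R) (i : 'I_n) : bool := (x i == 1) || (x i == -1).

Definition fix_bd (F : {mpoly R[n]}) (x : 'I_n -> R) : {mpoly R[n]} :=
  F \mPo [tuple if on_bd x i then (x i)%:MP else 'X_i | i < n].

Definition feasible (F : {mpoly R[n]}) (x : 'I_n -> R) : Prop :=
  exists c : R, fix_bd F x = c%:MP.

Definition sqdist (x y : 'I_n -> R) : R := \sum_(i < n) (x i - y i) ^+ 2.

Definition local_min_in (F : {mpoly R[n]}) (Delta : ('I_n -> R) -> Prop)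
  (x : 'I_n -> R) : Prop :=
  exists2 delta : R, 0 < delta &
    forall x', Delta x' -> sqdist x x' <= delta -> F.@[x] <= F.@[x'].

End Defs.

From HB Require Import structures.
From mathcomp Require Import all_boot all_order all_algebra.
From mathcomp Require Import mpoly.
From mathcomp Require Import ring lra.
Import Order.TTheory GRing.Theory Num.Theory.
Set Implicit Arguments. Unset Strict Implicit.
Local Open Scope ring_scope.

(* Since G(x) = 0, x is a fixed point of the projected gradient step, so
   (y_i - x_i) dF/dx_i(x) >= 0 for every y in the cube and every i.
   Feasibility lets us replace x by the point x0 that agrees with x on the
   boundary coordinates I and with y elsewhere, without changing F.  Going from
   x0 to y one coordinate at a time, multilinearity makes each increment exactly
   (y_i - x_i) dF/dx_i(z) for an intermediate point z, and only i in I
   contribute.  For y close to x, z is close to x, so dF/dx_i(z) keeps the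
   (nonzero) sign of dF/dx_i(x) and every increment is nonnegative. *)

Section RealInequalities.
Variable R : realFieldType.

Lemma normr_mulB_le (A B a b : R) :
  `|A| <= 1 -> `|B| <= 1 -> `|a| <= 1 -> `|b| <= 1 ->
  `|A * a - B * b| <= `|A - B| + `|a - b|.
Proof.
move=> A1 B1 a1 b1.
have -> : A * a - B * b = (A - B) * a + B * (a - b) by ring.
apply: le_trans (ler_normD _ _) _; rewrite !normrM.
by apply: lerD; [rewrite -[leRHS]mulr1 | rewrite -[leRHS]mul1r];
  [apply: ler_wpM2l | apply: ler_wpM2r].
Qed.

Lemma normr_prodB_le (I : Type) (r : seq I) (P : pred I) (a b : I -> R) :
  (forall i, `|a i| <= 1) -> (forall i, `|b i| <= 1) ->
  `|\prod_(i <- r | P i) a i - \prod_(i <- r | P i) b i|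
    <= \sum_(i <- r | P i) `|a i - b i|.
Proof.
move=> a1 b1.
pose K (A B C : R) := [/\ `|A| <= 1, `|B| <= 1 & `|A - B| <= C].
suff [] : K (\prod_(i <- r | P i) a i) (\prod_(i <- r | P i) b i)
            (\sum_(i <- r | P i) `|a i - b i|) by [].
apply: (big_ind3 K) => [|A1 B1 C1 A2 B2 C2 [A11 B11 AB1] [A21 B21 AB2]|i _].
- by split; rewrite ?normr1 ?subrr ?normr0.
- split; rewrite ?normrM ?mulr_ile1 //.
  exact: le_trans (normr_mulB_le A11 B11 A21 B21) (lerD AB1 AB2).
- by split.
Qed.

Lemma normr_exprB_le (a b : R) k :
  `|a| <= 1 -> `|b| <= 1 -> `|a ^+ k - b ^+ k| <= k%:R * `|a - b|.
Proof.
move=> a1 b1; rewrite -(subn0 k) -!prodr_const_nat mulr_natl -sumr_const_nat.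
exact: normr_prodB_le.
Qed.

Lemma normr_monomialB_le n (z w : 'I_n -> R) (m : 'I_n -> nat) e :
  (forall j, `|z j| <= 1) -> (forall j, `|w j| <= 1) ->
  (forall j, `|z j - w j| <= e) ->
  `|\prod_j z j ^+ m j - \prod_j w j ^+ m j| <= (\sum_j m j)%:R * e.
Proof.
move=> z1 w1 zw_e.
apply: le_trans (normr_prodB_le _ _ _ _) _ => [j|j|];
  rewrite ?normrX ?exprn_ile1 //.
rewrite natr_sum mulr_suml; apply: ler_sum => j _.
apply: le_trans (normr_exprB_le _ _ _) _ => //.
exact: ler_wpM2l.
Qed.

Lemma clamp_fixed_ge0 (a b d eta : R) :
  0 < eta -> -1 <= b <= 1 -> Num.min 1 (Num.max (-1) (a - eta * d)) = a ->
  0 <= (b - a) * d.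
Proof.
move=> eta_gt0 /andP[b_ge b_le].
case: (leP (-1) (a - eta * d)) => [t_ge|t_lt].
  by case: (leP 1 (a - eta * d)) => ? fixed; case: (ltrgt0P d) => d0; nra.
by case: (leP 1 (-1)) => ? fixed; case: (ltrgt0P d) => d0; nra.
Qed.

Lemma mulr_ge0_perturb (a d d' : R) :
  `|d' - d| < `|d| -> 0 <= a * d -> 0 <= a * d'.
Proof.
move=> near_d ad_ge0.
have dd'_gt0 : 0 < d * d'.
  case: (ltrgt0P d) near_d => [d_gt0|d_lt0|->]; last by rewrite ltNge normr_ge0.
  - by rewrite ltr_norml => /andP[]; nra.
  - by rewrite ltr_norml => /andP[]; nra.
nra.
Qed.

End RealInequalities.

Section Polynomials.
Variables (R : realFieldType) (n : nat).
Implicit Types (F P : {mpoly R[n]}) (v x y z w : 'I_n -> R).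

Lemma in_cube_norm x : in_cube x -> forall j, `|x j| <= 1.
Proof. by move=> x_cube j; rewrite ler_norml. Qed.

Lemma sqdist_le_sqr x y e : 0 <= e -> sqdist x y <= e ^+ 2 ->
  forall j, `|y j - x j| <= e.
Proof.
move=> e_ge0 le_xy j; rewrite -(ler_pXn2r (_ : 0 < 2)%N) ?nnegrE //.
rewrite real_normK ?num_real //; apply: le_trans le_xy.
rewrite /sqdist (bigD1 j) //= -sqrrN opprB lerDl.
by apply: sumr_ge0 => k _; rewrite sqr_ge0.
Qed.

(* Each monomial of degree d is d-Lipschitz on the cube for the sup-norm. *)
Definition cube_lip P : R := \sum_(m <- msupp P) `|P@_m| * (mdeg m)%:R.

Lemma meval_lipschitz P z w e :
  in_cube z -> in_cube w -> (forall j, `|z j - w j| <= e) ->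
  `|P.@[z] - P.@[w]| <= cube_lip P * e.
Proof.
move=> /in_cube_norm z1 /in_cube_norm w1 zw_e.
rewrite !mevalE -sumrB mulr_suml; apply: le_trans (ler_norm_sum _ _ _) _.
apply: ler_sum => m _; rewrite -mulrBr normrM -mulrA ler_wpM2l // mdegE.
exact: normr_monomialB_le.
Qed.

Definition upd v (i : 'I_n) (t : R) : 'I_n -> R :=
  fun j => if j == i then t else v j.

Lemma mevalX_updB v i t s (m : 'X_{1..n}) : (m i <= 1)%N ->
  'X_[m].@[upd v i t] - 'X_[m].@[upd v i s] = (t - s) * ('X_[m]^`M(i)).@[v].
Proof.
move=> le_mi1.
rewrite mderivX mevalZ !mevalX !(bigD1 i (P := predT)) //= /upd eqxx.
have prod_off_i u :
    \prod_(j < n | j != i) (if j == i then u else v j) ^+ m j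
  = \prod_(j < n | j != i) v j ^+ (m - U_(i))%MM j.
  apply: eq_bigr => j /negbTE ne_ji.
  by rewrite ne_ji mnmBE mnm1E eq_sym ne_ji subn0.
rewrite !prod_off_i mnmBE mnm1E eqxx.
by case: (m i) le_mi1 => [|[|]] // _; rewrite /= ?expr0 ?expr1; ring.
Qed.

Lemma meval_updB F v i t s : multilinear F ->
  F.@[upd v i t] - F.@[upd v i s] = (t - s) * (F^`M(i)).@[v].
Proof.
move=> mlF.
rewrite (mpolyE F) (raddf_sum (mderiv i)) !(raddf_sum (meval _)) /= -sumrB.
rewrite mulr_sumr.
apply: eq_big_seq => m /mlF le_m1.
by rewrite mderivZ !mevalZ -mulrBr mevalX_updB // mulrCA.
Qed.

Definition splice (k : nat) x y : 'I_n -> R :=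
  fun j => if (j < k)%N then y j else x j.

Lemma meval_telescope F x y : multilinear F ->
  F.@[y] - F.@[x] = \sum_(k < n) (y k - x k) * (F^`M(k)).@[splice k x y].
Proof.
move=> mlF.
have -> : F.@[y] = F.@[splice n x y].
  by apply: meval_eq => j; rewrite /splice ltn_ord.
have -> : F.@[x] = F.@[splice 0 x y] by [].
rewrite -(telescope_sumr (fun k => F.@[splice k x y])) // big_mkord.
apply: eq_bigr => k _; rewrite -meval_updB //.
congr (_ - _); apply: meval_eq => j; rewrite /upd /splice /=.
  rewrite ltnS leq_eqVlt.
  case: (eqVneq j k) => [->|ne_jk]; rewrite ?ltnn ?eqxx //.
  by rewrite (negbTE (ne_jk : (j : nat) != k)).
by case: (eqVneq j k) => [->|]; rewrite ?ltnn.
Qed.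

Lemma feasible_meval_fix_bd F x v : feasible F x ->
  F.@[fun j => if on_bd x j then x j else v j] = F.@[x].
Proof.
case=> c fixF.
have fixE u : F.@[fun j => if on_bd x j then x j else u j] = c.
  rewrite -(mevalC u c) -fixF comp_mpoly_meval; apply: meval_eq => j.
  by rewrite tnth_mktuple; case: ifP; rewrite ?mevalC ?mevalXU.
by rewrite fixE -(fixE x); apply: meval_eq => j; case: ifP.
Qed.

End Polynomials.

Section Stationarity.
Variables (R : realFieldType) (n : nat) (F : {mpoly R[n]}).
Implicit Types x y z : 'I_n -> R.

Lemma grad_map_eq0_ge0 eta x y i : 0 < eta -> in_cube y ->
  grad_map F eta x i = 0 -> 0 <= (y i - x i) * partial F i x.
Proof.
move=> eta_gt0 y_cube /eqP.
rewrite mulf_eq0 invr_eq0 (gt_eqF eta_gt0) orbF subr_eq0 => /eqP fixed.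
by apply: (clamp_fixed_ge0 eta_gt0 (y_cube i)); rewrite {2}fixed.
Qed.

Lemma partial_sign_nbhd x : in_cube x ->
  (forall i, on_bd x i -> partial F i x != 0) ->
  exists2 e, 0 < e & forall z, in_cube z -> (forall j, `|z j - x j| <= e) ->
    forall i, on_bd x i -> `|partial F i z - partial F i x| < `|partial F i x|.
Proof.
move=> x_cube dF_neq0.
pose d := \big[Num.min/1]_(i | on_bd x i) `|partial F i x|.
pose L := \big[Num.max/0]_i cube_lip (F^`M(i)).
have d_gt0 : 0 < d by apply: lt_bigmin => // i /dF_neq0; rewrite normr_gt0.
have L_ge0 : 0 <= L := bigmax_ge_id _ _ _ _.
have e_gt0 : 0 < d / (L + 1) by rewrite divr_gt0 // ltr_wpDl.
have Le_lt_d : L * (d / (L + 1)) < d.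
  by rewrite mulrCA gtr_pMr // ltr_pdivrMr ?ltr_wpDl // mul1r ltrDl.
exists (d / (L + 1)) => // z z_cube z_near i bd_i.
apply: le_lt_trans (meval_lipschitz (F^`M(i)) z_cube x_cube z_near) _.
have lip_le_L : cube_lip (F^`M(i)) <= L := le_bigmax _ _ i.
apply: le_lt_trans (ler_wpM2r (ltW e_gt0) lip_le_L) _.
exact: lt_le_trans Le_lt_d (bigmin_le_cond _ _ bd_i).
Qed.

End Stationarity.

Theorem proposition5 (R : realFieldType) (n : nat) (F : {mpoly R[n]})
  (eta : R) (x : 'I_n -> R) :
  multilinear F -> 0 < eta -> in_cube x ->
  feasible F x ->
  (forall i, grad_map F eta x i = 0) ->
  (forall i, on_bd x i -> partial F i x != 0) ->
  local_min_in F (@in_cube R n) x.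
Proof.
move=> mlF eta_gt0 x_cube feasF Gx0 dF_neq0.
have [e e_gt0 sign_stable] := partial_sign_nbhd x_cube dF_neq0.
exists (e ^+ 2) => [|y y_cube /(sqdist_le_sqr (ltW e_gt0)) y_near].
  exact: exprn_gt0.
rewrite -subr_ge0 -(feasible_meval_fix_bd y feasF) meval_telescope //.
set x0 := fun j => if on_bd x j then x j else y j.
apply: sumr_ge0 => k _.
have z_cube : in_cube (splice k x0 y).
  by move=> j; rewrite /splice /x0; do ?case: ifP => _.
have z_near j : `|splice k x0 y j - x j| <= e.
  by rewrite /splice /x0; do ?case: ifP => _;
    rewrite ?y_near ?subrr ?normr0 ?(ltW e_gt0).
rewrite {1}/x0; case: ifP => bd_k; last by rewrite subrr mul0r.
apply: mulr_ge0_perturb (sign_stable _ z_cube z_near _ bd_k) _.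
exact: grad_map_eq0_ge0 eta_gt0 y_cube (Gx0 k).
Qed.
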